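(* Every open subset of an E-space $X$ is the union of a $\sigma$-point-finite collection of cozero-sets of $X$.
   Context: ''Space'' means topological $T_0$-space. A zero-set (cozero-set) of $X$ is $f^{-1}(0)$ (resp. its complement) for continuous $f:X\to[0,1]$. A U-representation of $V\subseteq X$ is a sequence $(U_n(V))_{n\in\mathbb{N}}$ with $V=\bigcup_n U_n(V)$, $U_n(V)\subseteq U_{n+1}(V)$, $U_{2n-1}(V)$ a zero-set, $U_{2n}(V)$ a cozero-set. A family $\alpha$ is an almost subbase of $X$ if U-representations of its members can be chosen so that $\alpha\cup\{X\setminus U_{2n-1}(V):V\in\alpha,n\in\mathbb{N}\}$ is a subbase of $X$. A family is strongly point-finite if every countably infinite subfamily contains a finite subfamily with empty intersection; $\sigma$-strongly point-finite ($\sigma$-point-finite) means a countable union of strongly point-finite (point-finite) families. An E-space is a space with a $\sigma$-strongly point-finite almost subbase. *)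

From HB Require Import structures.
From mathcomp Require Import all_boot all_order all_algebra.
From mathcomp Require Import all_classical all_reals all_analysis.
From mathcomp Require Import Rstruct Rstruct_topology.
Set Implicit Arguments. Unset Strict Implicit. Unset Printing Implicit Defensive.
Import Order.TTheory GRing.Theory Num.Theory.
Local Open Scope classical_set_scope.
Local Open Scope ring_scope.

Section Defs.
Variable X : topologicalType.

Definition zero_set (Z : set X) : Prop :=
  exists f : X -> Rdefinitions.R, continuous f /\
    (forall x, 0 <= f x <= 1) /\ Z = f @^-1` [set 0].

Definition cozero_set (C : set X) : Prop :=
  exists f : X -> Rdefinitions.R, continuous f /\
    (forall x, 0 <= f x <= 1) /\ C = ~` (f @^-1` [set 0]).

(* U-representation of V, 0-based: u k = U_(k+1)(V); so u (2k) = U_(2k+1)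
   is a zero-set and u (2k+1) = U_(2k+2) is a cozero-set. *)
Definition U_representation (V : set X) (u : nat -> set X) : Prop :=
  V = \bigcup_n u n /\ (forall n, u n `<=` u n.+1) /\
  (forall k, zero_set (u k.*2)) /\ (forall k, cozero_set (u k.*2.+1)).

Definition subbase (beta : set (set X)) : Prop :=
  (forall B, beta B -> open B) /\
  (forall W, open W -> forall x, W x ->
     exists H : set (set X), [/\ finite_set H, H `<=` beta,
        (\bigcap_(B in H) B) x & \bigcap_(B in H) B `<=` W]).

Definition almost_subbase (alpha : set (set X)) : Prop :=
  exists u : set X -> nat -> set X,
    (forall V, alpha V -> U_representation V (u V)) /\
    subbase (alpha `|` [set ~` (u V k.*2) | k in [set: nat] & V in alpha]).


Definition point_finite (F : set (set X)) : Prop :=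
  forall x, finite_set [set V | F V /\ V x].

Definition strongly_point_finite (F : set (set X)) : Prop :=
  forall G : set (set X), G `<=` F -> countable G -> infinite_set G ->
    exists H : set (set X), [/\ finite_set H, H `<=` G &
       \bigcap_(B in H) B = set0].

Definition sigma_point_finite (F : set (set X)) : Prop :=
  exists Fn : nat -> set (set X),
    (forall n, point_finite (Fn n)) /\ F = \bigcup_n Fn n.

Definition sigma_strongly_point_finite (F : set (set X)) : Prop :=
  exists Fn : nat -> set (set X),
    (forall n, strongly_point_finite (Fn n)) /\ F = \bigcup_n Fn n.

Definition E_space : Prop :=
  kolmogorov_space X /\
  exists alpha, almost_subbase alpha /\ sigma_strongly_point_finite alpha.

End Defs.

(* Write the almost subbase as alpha = \bigcup_n alpha_n with every alpha_n
   point-finite (strong point-finiteness is only used through this).  For x in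
   U pick a basic neighbourhood of x inside U: an intersection of members V in f
   of alpha and of complements of zero-sets Z = u W (2j) in g.  At a level n
   large enough x lies in the cozero-set P = \bigcap_(V in f) u V (2n+1), which
   is contained in \bigcap f; hence P minus U is covered by g and P minus the
   union of g is a cozero-set inside U containing x.  The n-th family collects
   these sets for at most n members of alpha_0, ..., alpha_n and at most n
   zero-sets u W (2j) with j <= n.  It is point-finite because the V in f
   contain the point, and because the covering zero-sets are chosen greedily
   through prescribed points, leaving finitely many choices at each step. *)

From mathcomp Require Import all_boot all_order all_algebra.
From mathcomp Require Import all_classical all_reals all_analysis.
From mathcomp Require Import Rstruct Rstruct_topology zify.
Set Implicit Arguments. Unset Strict Implicit. Unset Printing Implicit Defensive.
Import Order.TTheory GRing.Theory Num.Theory.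
Local Open Scope classical_set_scope.

Lemma set_seq_cons (T : eqType) (a : T) (s : seq T) :
  [set` a :: s] = a |` [set` s].
Proof.
apply/seteqP; split => y /=; rewrite inE; first by move=> /orP[/eqP|]; [left|right].
by case=> [->|ys]; rewrite ?eqxx ?ys ?orbT.
Qed.

Section CozeroSets.
Variable X : topologicalType.

Lemma cozero_setT : cozero_set [set: X].
Proof.
exists (fun=> 1%R); split; first exact: cst_continuous.
split; first by move=> x; rewrite ler01 lexx.
by apply/seteqP; split => x //= _ /= /eqP; rewrite oner_eq0.
Qed.

Lemma cozero_setI (A B : set X) :
  cozero_set A -> cozero_set B -> cozero_set (A `&` B).
Proof.
move=> [f [cf [f01 ->]]] [g [cg [g01 ->]]].
exists (fun x => f x * g x)%R; split.
  by move=> x; apply: continuousM; [exact: cf|exact: cg].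
split.
  move=> x; have /andP[f0 f1] := f01 x; have /andP[g0 g1] := g01 x.
  by rewrite mulr_ge0 //= mulr_ile1.
rewrite -setCU; congr (~` _); apply/seteqP; split => x /=.
  by case=> ->; rewrite ?mul0r ?mulr0.
by move=> /eqP; rewrite mulf_eq0 => /orP[] /eqP; [left|right].
Qed.

Lemma cozero_set_setC (Z : set X) : zero_set Z -> cozero_set (~` Z).
Proof. by move=> [f [cf [f01 ->]]]; exists f. Qed.

Lemma cozero_set_bigcap_seq (I : eqType) (F : I -> set X) (s : seq I) :
  (forall i, i \in s -> cozero_set (F i)) ->
  cozero_set (\bigcap_(i in [set` s]) F i).
Proof.
elim: s => [|i s IHs] Fs; first by rewrite set_nil bigcap_set0; exact: cozero_setT.
rewrite set_seq_cons bigcap_setU1; apply: cozero_setI; first exact/Fs/mem_head.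
by apply: IHs => j js; apply: Fs; rewrite inE js orbT.
Qed.

End CozeroSets.

Lemma strongly_point_finite_point_finite (X : topologicalType) (F : set (set X)) :
  strongly_point_finite F -> point_finite F.
Proof.
move=> sF x; apply: contrapT => /infiniteP/card_subP[C CE CS].
have [|||H [_ HC H0]] := sF C.
- by move=> V /CS[].
- by rewrite /countable (card_le_eql CE) card_lexx.
- by apply/infiniteP; rewrite (card_le_eqr CE) card_lexx.
have : (\bigcap_(B in H) B) x by move=> B /HC /CS[].
by rewrite H0.
Qed.

Lemma finite_bounded_seqs (T : eqType) (A : set T) (r : nat) :
  finite_set A -> finite_set [set s : seq T | [set` s] `<=` A /\ (size s <= r)%N].
Proof.
move=> finA; elim: r => [|r IHr].
  by apply: (sub_finite_set _ (finite_set1 [::])) => -[|] // ? ? [].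
apply: (@sub_finite_set _ _ ([set [::]] `|` [set a :: s | a in A & s in
    [set s : seq T | [set` s] `<=` A /\ (size s <= r)%N]])).
  move=> [|a s] [sA sr]; [by left|right].
  move: sA; rewrite set_seq_cons subUset => -[aA sA].
  by exists a; [exact: aA|exists s].
by rewrite finite_setU; split; [exact: finite_set1|exact: finite_image2].
Qed.

Section GreedyCover.
Variables (T : Type) (A : set (set T)) (pick : set T -> T).

(* Each new member must contain the chosen point [pick Q] of the part [Q] not
   yet covered; over a point-finite [A] this leaves finitely many choices. *)
Fixpoint greedy_cover (Q : set T) (s : seq (set T)) : Prop :=
  if s is Z :: s' then [/\ A Z, Z (pick Q) & greedy_cover (Q `\` Z) s']
  else Q = set0.

Lemma greedy_cover_sub Q s : greedy_cover Q s -> Q `<=` \bigcup_(Z in [set` s]) Z.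
Proof.
elim: s Q => [|Z s IHs] Q /=; first by move=> ->.
case=> _ _ /IHs sQ y Qy; rewrite set_seq_cons bigcup_setU1.
by have [Zy|nZy] := pselect (Z y); [left|right; exact: sQ].
Qed.

Lemma greedy_cover_mem Q s : greedy_cover Q s -> [set` s] `<=` A.
Proof.
elim: s Q => [|Z s IHs] Q //=; case=> AZ _ /IHs sA.
by rewrite set_seq_cons subUset; split => // _ ->.
Qed.

Lemma finite_greedy_covers (r : nat) (Q : set T) :
  (forall p, finite_set [set Z | A Z /\ Z p]) ->
  finite_set [set s | greedy_cover Q s /\ (size s <= r)%N].
Proof.
move=> finA; elim: r Q => [|r IHr] Q.
  by apply: (sub_finite_set _ (finite_set1 [::])) => -[|] // ? ? [].
apply: (@sub_finite_set _ _ ([set [::]] `|`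
    \bigcup_(Z in [set Z | A Z /\ Z (pick Q)])
      [set Z :: s | s in [set s | greedy_cover (Q `\` Z) s /\ (size s <= r)%N]])).
  move=> [|Z s] [gs sr]; [by left|right].
  by case: gs => AZ Zp gs; exists Z => //; exists s.
rewrite finite_setU; split; first exact: finite_set1.
by apply: bigcup_finite => // Z _; exact/finite_image/IHr.
Qed.

Hypothesis pickP : forall Q : set T, Q !=set0 -> Q (pick Q).

Lemma greedy_cover_exists (g : seq (set T)) (Q : set T) :
  [set` g] `<=` A -> Q `<=` \bigcup_(Z in [set` g]) Z ->
  exists s, [/\ greedy_cover Q s, [set` s] `<=` [set` g] & (size s <= size g)%N].
Proof.
have [n] := ubnP (size g); elim: n g Q => // n IHn g Q gn gA Qg.
have [->|/set0P/pickP Qq] := eqVneq Q set0; first by exists [::].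
have [Z gZ Zq] := Qg _ Qq.
have sizeZg : size (rem Z g) = (size g).-1 := size_rem gZ.
have g0 : (0 < size g)%N by case: (g) gZ.
have [|||s [gs sg ss]] := IHn (rem Z g) (Q `\` Z).
- by rewrite sizeZg -ltnS prednK.
- by move=> W /mem_rem /gA.
- move=> y [/Qg[W gW Wy] nZy]; exists W => //.
  by apply: rem_mem => //; apply: contra_notN nZy => /eqP <-.
exists (Z :: s); split => /=.
- by split => //; exact: gA.
- rewrite set_seq_cons subUset; split=> [_ -> //|W /sg]; exact: mem_rem.
- by rewrite /= -(prednK g0) ltnS -sizeZg.
Qed.

End GreedyCover.

Section URepresentation.
Variables (X : topologicalType) (V : set X) (uV : nat -> set X).
Hypothesis uVrep : U_representation V uV.

Lemma U_representation_le a b : (a <= b)%N -> uV a `<=` uV b.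
Proof.
have [_ [uVS _]] := uVrep; elim: b => [|b IHb]; first by rewrite leqn0 => /eqP->.
by rewrite leq_eqVlt ltnS => /orP[/eqP->//|/IHb ab y /ab]; exact: uVS.
Qed.

Lemma U_representation_sub a : uV a `<=` V.
Proof. by have [-> _] := uVrep; move=> y uy; exists a. Qed.

Lemma U_representation_mem x : V x -> exists a, uV a x.
Proof. by have [-> _] := uVrep; move=> [a _ uax]; exists a. Qed.

End URepresentation.

Section AlmostSubbasePieces.
Variables (X : topologicalType) (alpha_ : nat -> set (set X)).
Variable u : set X -> nat -> set X.
Let alpha := \bigcup_n alpha_ n.
Hypothesis urep : forall V, alpha V -> U_representation V (u V).

Definition alpha_le n := \bigcup_(m in `I_n.+1) alpha_ m.

Definition zeros_le n := [set u V j.*2 | V in alpha_le n & j in `I_n.+1].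

Lemma alpha_le_sub n : alpha_le n `<=` alpha.
Proof. by move=> V [m _ aV]; exists m. Qed.

Lemma alpha_le_mono n n' : (n <= n')%N -> alpha_le n `<=` alpha_le n'.
Proof. by move=> nn' V [m /= mn aV]; exists m => //=; exact: leq_trans nn'. Qed.

Lemma zeros_le_mono n n' : (n <= n')%N -> zeros_le n `<=` zeros_le n'.
Proof.
move=> nn' _ [V aV [j /= jn <-]]; exists V; first exact: alpha_le_mono aV.
by exists j => //=; exact: leq_trans nn'.
Qed.

Lemma zero_set_zeros_le n Z : zeros_le n Z -> zero_set Z.
Proof. by move=> [V /alpha_le_sub/urep [_ [_ [zV _]]] [j _ <-]]. Qed.

Hypothesis alpha_pf : forall n, point_finite (alpha_ n).

Lemma point_finite_alpha_le n : point_finite (alpha_le n).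
Proof.
move=> x; apply: (@sub_finite_set _ _
    (\bigcup_(m in `I_n.+1) [set V | alpha_ m V /\ V x])).
  by move=> V [[m mn aV] Vx]; exists m.
by apply: bigcup_finite => // m _; exact: alpha_pf.
Qed.

Lemma point_finite_zeros_le n : point_finite (zeros_le n).
Proof.
move=> x; apply: (@sub_finite_set _ _
    [set u V j.*2 | V in [set V | alpha_le n V /\ V x] & j in `I_n.+1]).
  move=> _ [[V aV [j jn <-]] ux]; exists V; last by exists j.
  by split => //; exact: U_representation_sub (urep (alpha_le_sub aV)) _ _ ux.
exact: finite_image2 (point_finite_alpha_le n x) (finite_II n.+1).
Qed.

Definition core n (f : seq (set X)) := \bigcap_(V in [set` f]) u V n.*2.+1.

Lemma cozero_set_core n f : [set` f] `<=` alpha_le n -> cozero_set (core n f).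
Proof.
by move=> fA; apply: cozero_set_bigcap_seq => V /fA/alpha_le_sub/urep[_ [_ [_ cV]]].
Qed.

Lemma core_sub n f :
  [set` f] `<=` alpha_le n -> core n f `<=` \bigcap_(V in [set` f]) V.
Proof.
move=> fA y cy V fV.
exact: U_representation_sub (urep (alpha_le_sub (fA _ fV))) _ _ (cy _ fV).
Qed.

Variables (U : set X) (pick : set X -> X).

Definition pieces n : set (set X) :=
  [set S | exists f s, [/\ [set` f] `<=` alpha_le n, (size f <= n)%N,
     greedy_cover (zeros_le n) pick (core n f `\` U) s, (size s <= n)%N &
     S = core n f `\` \bigcup_(Z in [set` s]) Z]].

Lemma cozero_set_pieces n S : pieces n S -> cozero_set S.
Proof.
move=> [f [s [fA _ gs _ ->]]]; rewrite setDE.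
apply: cozero_setI; first exact: cozero_set_core.
rewrite setC_bigcup; apply: cozero_set_bigcap_seq => Z sZ; apply: cozero_set_setC.
exact: zero_set_zeros_le (greedy_cover_mem gs sZ).
Qed.

Lemma pieces_sub n S : pieces n S -> S `<=` U.
Proof.
move=> [f [s [_ _ gs _ ->]]] y [cy nsy]; apply: contrapT => nUy.
exact/nsy/(greedy_cover_sub gs).
Qed.

Lemma point_finite_pieces n : point_finite (pieces n).
Proof.
move=> y; apply: (@sub_finite_set _ _ (\bigcup_(f in
      [set f | [set` f] `<=` [set V | alpha_le n V /\ V y] /\ (size f <= n)%N])
    [set core n f `\` \bigcup_(Z in [set` s]) Z | s in
      [set s | greedy_cover (zeros_le n) pick (core n f `\` U) s /\ (size s <= n)%N]])).
  move=> _ [[f [s [fA fn gs sn ->]]] [cy _]]; exists f; last by exists s.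
  by split => // V fV; split; [exact: fA|exact: core_sub fA _ cy _ fV].
apply: bigcup_finite; first exact/finite_bounded_seqs/point_finite_alpha_le.
by move=> f _; exact/finite_image/finite_greedy_covers/point_finite_zeros_le.
Qed.

Let subbase_family := alpha `|` [set ~` (u V k.*2) | k in [set: nat] & V in alpha].

Section Decomposition.
Variable x : X.

Definition captured_at n V := alpha_le n V /\ u V n.*2.+1 x.

Definition avoided_at n Z := zeros_le n Z /\ ~ Z x.

Lemma captured_at_mono n n' : (n <= n')%N -> captured_at n `<=` captured_at n'.
Proof.
move=> nn' V [aV uVx]; split; first exact: alpha_le_mono aV.
by apply: U_representation_le (urep (alpha_le_sub aV)) _ _ _ _ uVx; lia.
Qed.

Lemma avoided_at_mono n n' : (n <= n')%N -> avoided_at n `<=` avoided_at n'.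
Proof. by move=> nn' Z [zZ nZx]; split => //; exact: zeros_le_mono zZ. Qed.

Lemma subbase_member_level B : subbase_family B -> B x ->
  exists n, captured_at n B \/ exists2 Z, avoided_at n Z & B = ~` Z.
Proof.
case=> [aB|[k _ [V [m _ aV] <-]]] Bx.
  have [m _ aBm] := aB; have [i uBi] := U_representation_mem (urep aB) Bx.
  exists (maxn m i); left; split; first by exists m => //=; lia.
  by apply: U_representation_le (urep aB) _ _ _ _ uBi; lia.
exists (maxn m k); right; exists (u V k.*2) => //; split => //.
by exists V; [exists m => //=; lia|exists k => //=; lia].
Qed.

Lemma subbase_meet_decomp (h : seq (set X)) :
  [set` h] `<=` [set B | subbase_family B /\ B x] ->
  exists n (f g : seq (set X)),
    [/\ [set` f] `<=` captured_at n, [set` g] `<=` avoided_at n &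
    \bigcap_(V in [set` f]) V `\` \bigcup_(Z in [set` g]) Z `<=`
    \bigcap_(B in [set` h]) B].
Proof.
elim: h => [|B h IHh].
  by exists 0%N, [::], [::]; rewrite !set_nil bigcap_set0.
rewrite set_seq_cons subUset => -[/(_ B erefl)[famB Bx] /IHh[n1 [f [g [fc ga fgh]]]]].
have [n2 nB] := subbase_member_level famB Bx.
have lift_f := subset_trans fc (captured_at_mono (leq_maxl n1 n2)).
have lift_g := subset_trans ga (avoided_at_mono (leq_maxl n1 n2)).
rewrite bigcap_setU1; case: nB => [cB|[Z aZ ->]].
  exists (maxn n1 n2), (B :: f), g; split => //.
    rewrite set_seq_cons subUset; split=> [_ ->|//].
    exact: captured_at_mono (leq_maxr _ _) _ cB.
  by rewrite set_seq_cons bigcap_setU1 => y [[By fy] ngy]; split; last exact: fgh.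
exists (maxn n1 n2), f, (Z :: g); split => //.
  rewrite set_seq_cons subUset; split=> [_ ->|//].
  exact: avoided_at_mono (leq_maxr _ _) _ aZ.
rewrite set_seq_cons bigcup_setU1 => y [fy nZgy].
by split=> [Zy|]; [apply: nZgy; left|apply: fgh; split=> // gy; apply: nZgy; right].
Qed.

End Decomposition.

Hypothesis pickP : forall Q : set X, Q !=set0 -> Q (pick Q).

Lemma pieces_cover : subbase subbase_family -> open U ->
  U `<=` \bigcup_(S in \bigcup_n pieces n) S.
Proof.
move=> [_ sb] oU x Ux; have [H [finH Hsb Hx HU]] := sb U oU x Ux.
have [h Hh] := (finite_seqP H).1 finH; subst H.
have [|n0 [f [g [fc ga fgh]]]] := @subbase_meet_decomp x h.
  by move=> B hB; split; [exact: Hsb|exact: Hx].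
set n := maxn n0 (maxn (size f) (size g)).
have n0n : (n0 <= n)%N := leq_maxl _ _.
have {}fc := subset_trans fc (captured_at_mono n0n).
have {}ga := subset_trans ga (avoided_at_mono n0n).
have fA : [set` f] `<=` alpha_le n by move=> V /fc[].
have cover : core n f `\` U `<=` \bigcup_(Z in [set` g]) Z.
  move=> y [cy nUy]; apply: contrapT => ngy.
  by apply: nUy; apply: HU; apply: fgh; split => //; exact: core_sub fA _ cy.
have [s [gs sg ss]] := greedy_cover_exists pickP (fun Z gZ => (ga Z gZ).1) cover.
exists (core n f `\` \bigcup_(Z in [set` s]) Z).
  exists n => //; exists f, s; split => //; first by rewrite !leq_max leqnn orbT.
  by apply: leq_trans ss _; rewrite !leq_max leqnn !orbT.
by split=> [V /fc[]|[Z /sg/ga[_ nZx] Zx]].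
Qed.

End AlmostSubbasePieces.

Theorem proposition5p7 (X : topologicalType) (U : set X) :
  E_space X -> open U ->
  exists C : set (set X),
    sigma_point_finite C /\ (forall V, C V -> cozero_set V) /\
    U = \bigcup_(V in C) V.
Proof.
move=> [_ [alpha [[u [urep sb]] [alpha_ [spf alphaE]]]]] oU; subst alpha.
have [U0|/eqP/set0P[x0 _]] := pselect (U = set0).
  exists set0; split; last by split => //; rewrite U0 bigcup_set0.
  exists (fun=> set0); split; last by rewrite bigcup0.
  by move=> _ x; apply: sub_finite_set (finite_set0 _) => V [].
have alpha_pf n := strongly_point_finite_point_finite (spf n).
pose pick := xget x0.
have pickP (Q : set X) : Q !=set0 -> Q (pick Q) by exact: xgetPex.
exists (\bigcup_n pieces alpha_ u U pick n); split; [|split].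
- by exists (pieces alpha_ u U pick); split=> // n; exact: point_finite_pieces.
- by move=> S [n _]; exact: cozero_set_pieces.
- apply/seteqP; split; first exact: (pieces_cover urep pickP sb oU).
  by move=> y [S [n _ /pieces_sub]]; apply.
Qed.
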